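(* Let $\omega:\mathbb N\to[1,\infty)$ be an unbounded weight on $\mathbb N_{\min}$. Then $(\ell^1_\omega(\mathbb N_{\min}),\mathbf T_2)$ is not an AMNM pair.
   Context: $\mathbb N_{\min}$ is the semilattice $\mathbb N$ with product $(m,n)\mapsto\min(m,n)$; every function $\omega:\mathbb N\to[1,\infty)$ is a submultiplicative weight on it. $\ell^1_\omega(\mathbb N_{\min})$ is the Banach space of $a:\mathbb N\to\mathbb C$ with $\|a\|=\sum_n|a(n)|\omega(n)<\infty$, with convolution product $\delta_m*\delta_n=\delta_{\min(m,n)}$. $\mathbf T_2=\{\begin{pmatrix}a&b\\0&a\end{pmatrix}:a,b\in\mathbb C\}$ with norm $|a|+|b|$. For a bounded linear map $T:A\to B$ between Banach algebras, $\operatorname{def}(T)=\sup\{\|T(xy)-T(x)T(y)\|:\|x\|,\|y\|\le1\}$ and $\operatorname{Mult}(A,B)$ is the set of bounded multiplicative linear maps $A\to B$ (including $0$). $(A,B)$ is an AMNM pair if for every $K>0$ and $\varepsilon>0$ there exists $\delta>0$ such that every bounded linear $T:A\to B$ with $\|T\|\le K$ and $\operatorname{def}(T)\le\delta$ satisfies $\operatorname{dist}(T,\operatorname{Mult}(A,B))\le\varepsilon$ in operator norm. *)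

From Stdlib Require Import Reals Lra ClassicalEpsilon.
Open Scope R_scope.

Definition C := (R * R)%type.
Definition C0 : C := (0, 0).
Definition Cadd (z w : C) : C := (fst z + fst w, snd z + snd w).
Definition Copp (z : C) : C := (- fst z, - snd z).
Definition Csub (z w : C) : C := Cadd z (Copp w).
Definition Cmul (z w : C) : C :=
  (fst z * fst w - snd z * snd w, fst z * snd w + snd z * fst w).
Definition Cnorm (z : C) : R := sqrt (fst z ^ 2 + snd z ^ 2).

(* The value of a convergent real series (arbitrary if it diverges). *)
Definition Rsum (u : nat -> R) : R :=
  epsilon (inhabits 0) (fun l => infinite_sum u l).
Definition Csum (f : nat -> C) : C :=
  (Rsum (fun n => fst (f n)), Rsum (fun n => snd (f n))).

Definition seqC := nat -> C.

Definition in_l1 (omega : nat -> R) (x : seqC) : Prop :=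
  exists l, infinite_sum (fun n => Cnorm (x n) * omega n) l.

Definition l1norm (omega : nat -> R) (x : seqC) : R :=
  Rsum (fun n => Cnorm (x n) * omega n).

Definition l1add (x y : seqC) : seqC := fun n => Cadd (x n) (y n).
Definition l1scal (c : C) (x : seqC) : seqC := fun n => Cmul c (x n).

(* Convolution with delta_m * delta_n = delta_(min m n):
   (x*y)(k) = sum_m sum_n [min m n = k] x(m) y(n). *)
Definition l1mul (x y : seqC) : seqC := fun k =>
  Csum (fun m => Csum (fun n =>
    if Nat.eqb (Nat.min m n) k then Cmul (x m) (y n) else C0)).

(* (a, b) represents the matrix [[a, b], [0, a]]. *)
Definition T2 := (C * C)%type.
Definition T2add (s t : T2) : T2 := (Cadd (fst s) (fst t), Cadd (snd s) (snd t)).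
Definition T2sub (s t : T2) : T2 := (Csub (fst s) (fst t), Csub (snd s) (snd t)).
Definition T2scal (c : C) (s : T2) : T2 := (Cmul c (fst s), Cmul c (snd s)).
Definition T2mul (s t : T2) : T2 :=
  (Cmul (fst s) (fst t), Cadd (Cmul (fst s) (snd t)) (Cmul (snd s) (fst t))).
Definition T2norm (s : T2) : R := Cnorm (fst s) + Cnorm (snd s).

(* Only the values on l^1_omega matter. *)
Definition is_linear (omega : nat -> R) (T : seqC -> T2) : Prop :=
  (forall x y, in_l1 omega x -> in_l1 omega y ->
     T (l1add x y) = T2add (T x) (T y)) /\
  (forall c x, in_l1 omega x -> T (l1scal c x) = T2scal c (T x)).

Definition opnorm_le (omega : nat -> R) (T : seqC -> T2) (K : R) : Prop :=
  forall x, in_l1 omega x -> T2norm (T x) <= K * l1norm omega x.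

Definition is_bounded (omega : nat -> R) (T : seqC -> T2) : Prop :=
  exists K, opnorm_le omega T K.

Definition defect_le (omega : nat -> R) (T : seqC -> T2) (d : R) : Prop :=
  forall x y, in_l1 omega x -> in_l1 omega y ->
    l1norm omega x <= 1 -> l1norm omega y <= 1 ->
    T2norm (T2sub (T (l1mul x y)) (T2mul (T x) (T y))) <= d.

Definition is_mult (omega : nat -> R) (phi : seqC -> T2) : Prop :=
  is_linear omega phi /\ is_bounded omega phi /\
  (forall x y, in_l1 omega x -> in_l1 omega y ->
     phi (l1mul x y) = T2mul (phi x) (phi y)).

Definition dist_mult_le (omega : nat -> R) (T : seqC -> T2) (eps : R) : Prop :=
  forall eta, eta > 0 -> exists phi, is_mult omega phi /\
    opnorm_le omega (fun x => T2sub (T x) (phi x)) (eps + eta).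

Definition AMNM_pair (omega : nat -> R) : Prop :=
  forall K eps, K > 0 -> eps > 0 ->
    exists delta, delta > 0 /\
      forall T : seqC -> T2,
        is_linear omega T -> opnorm_le omega T K -> defect_le omega T delta ->
        dist_mult_le omega T eps.

(* For each [N] let [chi(x) = sum_(n > N) x(n)], a character of [l^1(N_min)]
   (indeed [min m n > N] iff [m, n > N]), and let
   [T_N x = [[chi(x), omega(N) x(N)], [0, chi(x)]]].  Using the coefficient formula
   [(x*y)(N) = x(N) y(N) + x(N) chi(y) + chi(x) y(N)] one finds that
   [T_N(xy) - T_N(x) T_N(y)] has the single entry [omega(N) x(N) y(N)], of norm at
   most [1/omega(N)] for [||x||, ||y|| <= 1], while [||T_N|| <= 3].  On the other
   hand a multiplicative [phi] sends the idempotent [delta_N] to an idempotent of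
   [T_2], which is diagonal, whereas [T_N delta_N] has off-diagonal entry
   [omega(N) = ||delta_N||]; so [||T_N - phi|| >= 1].  Letting [omega(N) -> oo]
   contradicts the AMNM property. *)

From Stdlib Require Import Reals Lra Lia ClassicalEpsilon FunctionalExtensionality.
(* Imported after the reals so that [C] denotes the complex numbers of [Defs]. *)
From Pilot Require Import Defs.
Open Scope R_scope.

Ltac destruct_nat_tests := repeat match goal with
  | |- context [Nat.eqb ?a ?b] => destruct (Nat.eqb_spec a b)
  | |- context [Nat.leb ?a ?b] => destruct (Nat.leb_spec a b)
  end.

(** * Real series *)

Lemma Rsum_eq u l : infinite_sum u l -> Rsum u = l.
Proof.
  intro H. unfold Rsum.
  pose proof (epsilon_spec (inhabits 0) (fun l => infinite_sum u l) (ex_intro _ l H)) as Hspec.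
  exact (uniqueness_sum _ _ _ Hspec H).
Qed.

Lemma infinite_sum_ext u v l : (forall n, u n = v n) -> infinite_sum v l -> infinite_sum u l.
Proof.
  intros E H eps Heps. destruct (H eps Heps) as [N HN]. exists N. intros n Hn.
  rewrite (sum_eq u v n) by (intros; apply E). auto.
Qed.

Lemma infinite_sum_lin u v a b (alpha beta : R) :
  infinite_sum u a -> infinite_sum v b ->
  infinite_sum (fun n => alpha * u n + beta * v n) (alpha * a + beta * b).
Proof.
  intros Hu Hv.
  assert (Hcst : forall c, Un_cv (fun _ => c) c).
  { intros c eps Heps. exists 0%nat. intros. unfold Rdist. rewrite Rminus_diag, Rabs_R0. auto. }
  pose proof (CV_plus _ _ _ _ (CV_mult _ _ _ _ (Hcst alpha) Hu) (CV_mult _ _ _ _ (Hcst beta) Hv)) as H.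
  assert (Hpartial : forall n, sum_f_R0 (fun n => alpha * u n + beta * v n) n
                               = alpha * sum_f_R0 u n + beta * sum_f_R0 v n).
  { induction n; cbn [sum_f_R0]; [|rewrite IHn]; ring. }
  intros eps Heps. destruct (H eps Heps) as [N HN]. exists N. intros n Hn.
  rewrite Hpartial. apply HN; auto.
Qed.

Lemma infinite_sum_scale c u a : infinite_sum u a -> infinite_sum (fun n => c * u n) (c * a).
Proof.
  intros Hu. replace (c * a) with (c * a + 0 * a) by ring.
  apply infinite_sum_ext with (v := fun n => c * u n + 0 * u n); [intros; ring|].
  apply infinite_sum_lin; assumption.
Qed.

Lemma infinite_sum_single k c : infinite_sum (fun m => if Nat.eqb m k then c else 0) c.
Proof.
  assert (Hpartial : forall n, sum_f_R0 (fun m => if Nat.eqb m k then c else 0) n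
                               = if Nat.leb k n then c else 0).
  { induction n; cbn [sum_f_R0]; [|rewrite IHn]; destruct_nat_tests; lia || ring. }
  intros eps Heps. exists k. intros n Hn. rewrite Hpartial.
  destruct_nat_tests; [|lia]. unfold Rdist. rewrite Rminus_diag, Rabs_R0. auto.
Qed.

Fixpoint sum_below (u : nat -> R) (M : nat) : R :=
  match M with 0%nat => 0 | S m => sum_below u m + u m end.

Lemma sum_f_R0_below u n : sum_f_R0 u n = sum_below u (S n).
Proof. induction n; cbn [sum_f_R0 sum_below] in *; [ring | rewrite IHn; ring]. Qed.

Definition mask (M : nat) (u : nat -> R) : nat -> R :=
  fun n => if Nat.leb M n then u n else 0.

Lemma infinite_sum_mask M u l :
  infinite_sum u l -> infinite_sum (mask M u) (l - sum_below u M).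
Proof.
  assert (Hpartial : forall n, sum_f_R0 (mask M u) n
                               = sum_below u (S n) - sum_below u (Nat.min M (S n))).
  { induction n.
    - unfold mask. destruct M; [cbn; ring|]. rewrite Nat.min_r by lia. cbn; ring.
    - cbn [sum_f_R0]. rewrite IHn. unfold mask. destruct_nat_tests.
      + rewrite !Nat.min_l by lia. cbn [sum_below]. ring.
      + rewrite !Nat.min_r by lia. cbn [sum_below]. ring. }
  intros H eps Heps. destruct (H eps Heps) as [N HN]. exists (N + M)%nat. intros n Hn.
  rewrite Hpartial, Nat.min_l, <- sum_f_R0_below by lia. unfold Rdist.
  replace (sum_f_R0 u n - sum_below u M - (l - sum_below u M)) with (sum_f_R0 u n - l) by ring.
  apply HN. lia.
Qed.

Definition summable (u : nat -> R) : Prop := exists l, infinite_sum u l.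

Definition tail (u : nat -> R) (M : nat) : R := Rsum (mask M u).

Lemma tail_eq u l M : infinite_sum u l -> tail u M = l - sum_below u M.
Proof. intros H. apply Rsum_eq, infinite_sum_mask, H. Qed.

Lemma tail_spec u M : summable u -> infinite_sum (mask M u) (tail u M).
Proof. intros [l H]. rewrite (tail_eq _ _ _ H). apply infinite_sum_mask, H. Qed.

Lemma tail_succ u k : summable u -> tail u k = u k + tail u (S k).
Proof. intros [l H]. rewrite !(tail_eq _ _ _ H). cbn [sum_below]. ring. Qed.

Lemma tail_tends_0 u : summable u -> Un_cv (tail u) 0.
Proof.
  intros [l H] eps Heps. destruct (H eps Heps) as [N HN]. exists (S N). intros n Hn.
  destruct n as [|n]; [lia|]. rewrite (tail_eq _ _ _ H), <- sum_f_R0_below.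
  unfold Rdist in *. rewrite Rminus_0_r, Rabs_minus_sym. apply HN. lia.
Qed.

Lemma infinite_sum_telescoping_mask (P : nat -> R) M :
  Un_cv P 0 -> infinite_sum (mask M (fun k => P k - P (S k))) (P M).
Proof.
  intros HP.
  assert (Hbelow : forall m, sum_below (fun k => P k - P (S k)) m = P 0%nat - P m).
  { induction m; cbn [sum_below]; [ring | rewrite IHm; ring]. }
  assert (Hfull : infinite_sum (fun k => P k - P (S k)) (P 0%nat)).
  { intros eps Heps. destruct (HP eps Heps) as [N HN]. exists N. intros n Hn.
    rewrite sum_f_R0_below, Hbelow. unfold Rdist in *.
    replace (P 0%nat - P (S n) - P 0%nat) with (- (P (S n) - 0)) by ring.
    rewrite Rabs_Ropp. apply HN. lia. }
  pose proof (infinite_sum_mask M _ _ Hfull) as H. rewrite Hbelow in H.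
  replace (P M) with (P 0%nat - (P 0%nat - P M)) by ring. exact H.
Qed.

Lemma summable_dominated u v l :
  (forall n, Rabs (u n) <= v n) -> infinite_sum v l -> summable u.
Proof.
  intros Hb Hv.
  destruct (Rseries_CV_comp (fun n => u n + Rabs (u n)) (fun n => 2 * v n)) as [lp Hp].
  { intros n. pose proof (Rle_abs (u n)). pose proof (Rle_abs (- u n)).
    rewrite Rabs_Ropp in *. pose proof (Hb n). lra. }
  { exists (2 * l). apply infinite_sum_scale, Hv. }
  destruct (Rseries_CV_comp (fun n => Rabs (u n)) v) as [la Ha].
  { intros n. split; [apply Rabs_pos | apply Hb]. }
  { exists l. exact Hv. }
  exists (1 * lp + (-1) * la).
  apply infinite_sum_ext with (v := fun n => 1 * (u n + Rabs (u n)) + (-1) * Rabs (u n)).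
  { intros; ring. }
  apply infinite_sum_lin; assumption.
Qed.

Lemma infinite_sum_abs_le w v lw lv :
  infinite_sum w lw -> infinite_sum v lv -> (forall n, Rabs (w n) <= v n) -> Rabs lw <= lv.
Proof. intros Hw Hv Hb. exact (sum_cv_maj v (fun n _ => w n) 0 lw lv Hw Hv Hb). Qed.

Lemma term_le_infinite_sum v l N : (forall n, 0 <= v n) -> infinite_sum v l -> v N <= l.
Proof.
  intros Hpos Hv. apply Rle_trans with (sum_f_R0 v N); [|apply sum_incr; auto].
  destruct N; cbn [sum_f_R0]; [lra|]. pose proof (cond_pos_sum _ N Hpos). lra.
Qed.

Ltac C_ring :=
  apply injective_projections; unfold Csub, Cadd, Copp, Cmul, C0; cbn [fst snd]; ring.

Lemma Cnorm_nonneg z : 0 <= Cnorm z.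
Proof. apply sqrt_pos. Qed.

Lemma Cnorm_mul z w : Cnorm (Cmul z w) = Cnorm z * Cnorm w.
Proof.
  unfold Cnorm, Cmul. cbn [fst snd]. rewrite <- sqrt_mult_alt by nra. f_equal. ring.
Qed.

Lemma Cnorm_real a : Cnorm (a, 0) = Rabs a.
Proof. unfold Cnorm. cbn [fst snd]. rewrite <- sqrt_Rsqr_abs. f_equal. unfold Rsqr. ring. Qed.

Lemma Cnorm_C0 : Cnorm C0 = 0.
Proof. unfold C0. rewrite Cnorm_real. apply Rabs_R0. Qed.

Lemma Cnorm_ge_fst z : Rabs (fst z) <= Cnorm z.
Proof.
  unfold Cnorm. rewrite <- sqrt_Rsqr_abs. apply sqrt_le_1_alt. unfold Rsqr. nra.
Qed.

Lemma Cnorm_ge_snd z : Rabs (snd z) <= Cnorm z.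
Proof.
  unfold Cnorm. rewrite <- sqrt_Rsqr_abs. apply sqrt_le_1_alt. unfold Rsqr. nra.
Qed.

Lemma Cnorm_le_components z : Cnorm z <= Rabs (fst z) + Rabs (snd z).
Proof.
  pose proof (Rabs_pos (fst z)). pose proof (Rabs_pos (snd z)).
  unfold Cnorm. rewrite <- (sqrt_pow2 (Rabs (fst z) + Rabs (snd z))) by lra.
  apply sqrt_le_1_alt. rewrite <- (pow2_abs (fst z)), <- (pow2_abs (snd z)). nra.
Qed.

Definition re (f : nat -> C) : nat -> R := fun n => fst (f n).
Definition im (f : nat -> C) : nat -> R := fun n => snd (f n).

Definition Cseries (f : nat -> C) (l : C) : Prop :=
  infinite_sum (re f) (fst l) /\ infinite_sum (im f) (snd l).

Lemma Csum_eq f l : Cseries f l -> Csum f = l.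
Proof.
  intros [Hre Him]. unfold Csum.
  change (fun n => fst (f n)) with (re f). change (fun n => snd (f n)) with (im f).
  rewrite (Rsum_eq _ _ Hre), (Rsum_eq _ _ Him). symmetry. apply surjective_pairing.
Qed.

Lemma Cseries_ext f g l : (forall n, f n = g n) -> Cseries g l -> Cseries f l.
Proof.
  intros E [Hre Him]. split;
    [apply infinite_sum_ext with (re g) | apply infinite_sum_ext with (im g)];
    auto; intros n; unfold re, im; rewrite E; reflexivity.
Qed.

Lemma Cseries_add f g a b :
  Cseries f a -> Cseries g b -> Cseries (fun n => Cadd (f n) (g n)) (Cadd a b).
Proof.
  intros [Hf1 Hf2] [Hg1 Hg2]. unfold Cadd. split; cbn [fst snd].
  - apply infinite_sum_ext with (fun n => 1 * re f n + 1 * re g n);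
      [intros; unfold re; cbn; ring|].
    replace (fst a + fst b) with (1 * fst a + 1 * fst b) by ring. apply infinite_sum_lin; auto.
  - apply infinite_sum_ext with (fun n => 1 * im f n + 1 * im g n);
      [intros; unfold im; cbn; ring|].
    replace (snd a + snd b) with (1 * snd a + 1 * snd b) by ring. apply infinite_sum_lin; auto.
Qed.

Lemma Cseries_mul_l c f a : Cseries f a -> Cseries (fun n => Cmul c (f n)) (Cmul c a).
Proof.
  intros [Hf1 Hf2]. unfold Cmul. split; cbn [fst snd].
  - apply infinite_sum_ext with (fun n => fst c * re f n + (- snd c) * im f n);
      [intros; unfold re, im; cbn; ring|].
    replace (fst c * fst a - snd c * snd a) with (fst c * fst a + (- snd c) * snd a) by ring.
    apply infinite_sum_lin; auto.
  - apply infinite_sum_ext with (fun n => fst c * im f n + snd c * re f n);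
      [intros; unfold re, im; cbn; ring|].
    apply infinite_sum_lin; auto.
Qed.

Lemma Cseries_mul_r c f a : Cseries f a -> Cseries (fun n => Cmul (f n) c) (Cmul a c).
Proof.
  intros H. replace (Cmul a c) with (Cmul c a) by C_ring.
  apply Cseries_ext with (fun n => Cmul c (f n)); [intros; C_ring | apply Cseries_mul_l, H].
Qed.

Lemma Cseries_single k c : Cseries (fun n => if Nat.eqb n k then c else C0) c.
Proof.
  split; [apply infinite_sum_ext with (fun n => if Nat.eqb n k then fst c else 0)
         |apply infinite_sum_ext with (fun n => if Nat.eqb n k then snd c else 0)];
    try apply infinite_sum_single; intros n; unfold re, im; destruct_nat_tests; reflexivity.
Qed.

Lemma Cseries_zero : Cseries (fun _ => C0) C0.
Proof.
  apply Cseries_ext with (fun n => if Nat.eqb n 0 then C0 else C0); [|apply Cseries_single].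
  intros n. destruct_nat_tests; reflexivity.
Qed.

Definition Cmask (M : nat) (f : nat -> C) : nat -> C :=
  fun n => if Nat.leb M n then f n else C0.

Definition Csummable (f : nat -> C) : Prop := summable (re f) /\ summable (im f).

Definition Ctail (f : nat -> C) (M : nat) : C := (tail (re f) M, tail (im f) M).

Lemma re_Cmask M f n : re (Cmask M f) n = mask M (re f) n.
Proof. unfold re, Cmask, mask. destruct_nat_tests; reflexivity. Qed.

Lemma im_Cmask M f n : im (Cmask M f) n = mask M (im f) n.
Proof. unfold im, Cmask, mask. destruct_nat_tests; reflexivity. Qed.

Lemma Ctail_spec f M : Csummable f -> Cseries (Cmask M f) (Ctail f M).
Proof.
  intros [Hre Him]. split; cbn [Ctail fst snd].
  - apply infinite_sum_ext with (mask M (re f)); [apply re_Cmask | apply tail_spec, Hre].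
  - apply infinite_sum_ext with (mask M (im f)); [apply im_Cmask | apply tail_spec, Him].
Qed.

Lemma Ctail_eq f M l : Cseries (Cmask M f) l -> Ctail f M = l.
Proof.
  intros [Hre Him]. unfold Ctail, tail.
  rewrite (surjective_pairing l), <- (Rsum_eq _ _ Hre), <- (Rsum_eq _ _ Him).
  f_equal; f_equal; apply functional_extensionality; intros n;
    [symmetry; apply re_Cmask | symmetry; apply im_Cmask].
Qed.

Lemma Ctail_succ f k : Csummable f -> Ctail f k = Cadd (f k) (Ctail f (S k)).
Proof.
  intros [Hre Him]. unfold Ctail, Cadd. cbn [fst snd].
  rewrite (tail_succ _ _ Hre), (tail_succ _ _ Him). reflexivity.
Qed.

Lemma Ctail_add f g M : Csummable f -> Csummable g ->
  Ctail (fun n => Cadd (f n) (g n)) M = Cadd (Ctail f M) (Ctail g M).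
Proof.
  intros Hf Hg. apply Ctail_eq.
  apply Cseries_ext with (fun n => Cadd (Cmask M f n) (Cmask M g n)).
  - intros n. unfold Cmask. destruct_nat_tests; [reflexivity | C_ring].
  - apply Cseries_add; apply Ctail_spec; assumption.
Qed.

Lemma Ctail_mul_l c f M : Csummable f ->
  Ctail (fun n => Cmul c (f n)) M = Cmul c (Ctail f M).
Proof.
  intros Hf. apply Ctail_eq.
  apply Cseries_ext with (fun n => Cmul c (Cmask M f n)).
  - intros n. unfold Cmask. destruct_nat_tests; [reflexivity | C_ring].
  - apply Cseries_mul_l, Ctail_spec, Hf.
Qed.

(* Summation by parts for a product of tails:
   [sum_(k >= M) (f k * tail g k + tail f (k+1) * g k) = tail f M * tail g M],
   since the summand is [P k - P (k+1)] for [P k = tail f k * tail g k -> 0]. *)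
Lemma Ctail_product f g M : Csummable f -> Csummable g ->
  Cseries (Cmask M (fun k => Cadd (Cmul (f k) (Ctail g k)) (Cmul (Ctail f (S k)) (g k))))
          (Cmul (Ctail f M) (Ctail g M)).
Proof.
  intros Hf Hg. set (P k := Cmul (Ctail f k) (Ctail g k)).
  assert (Hterm : forall k, Cadd (Cmul (f k) (Ctail g k)) (Cmul (Ctail f (S k)) (g k))
                            = Csub (P k) (P (S k))).
  { intros k. unfold P. rewrite (Ctail_succ f k Hf), (Ctail_succ g k Hg). C_ring. }
  destruct Hf as [Hf1 Hf2], Hg as [Hg1 Hg2].
  pose proof (tail_tends_0 _ Hf1). pose proof (tail_tends_0 _ Hg1).
  pose proof (tail_tends_0 _ Hf2). pose proof (tail_tends_0 _ Hg2).
  split.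
  - apply infinite_sum_ext with (mask M (fun k => fst (P k) - fst (P (S k)))).
    { intros n. rewrite re_Cmask. unfold mask, re. rewrite Hterm. reflexivity. }
    apply infinite_sum_telescoping_mask. replace 0 with (0 * 0 - 0 * 0) by ring.
    apply CV_minus; apply CV_mult; assumption.
  - apply infinite_sum_ext with (mask M (fun k => snd (P k) - snd (P (S k)))).
    { intros n. rewrite im_Cmask. unfold mask, im. rewrite Hterm. reflexivity. }
    apply infinite_sum_telescoping_mask. replace 0 with (0 * 0 + 0 * 0) by ring.
    apply CV_plus; apply CV_mult; assumption.
Qed.

(** * The convolution of [l^1(N_min)] *)

(* Coefficient formula: [(x*y)(k) = x(k) * sum_(n>=k) y(n) + sum_(m>k) x(m) * y(k)],
   since [min m n = k] iff either [m = k <= n] or [n = k < m]. *)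
Lemma l1mul_coeff x y k : Csummable x -> Csummable y ->
  l1mul x y k = Cadd (Cmul (x k) (Ctail y k)) (Cmul (Ctail x (S k)) (y k)).
Proof.
  intros Hx Hy. unfold l1mul. apply Csum_eq.
  assert (Hrow : forall m,
    Cseries (fun n => if Nat.eqb (Nat.min m n) k then Cmul (x m) (y n) else C0)
            (Cadd (if Nat.eqb m k then Cmul (x k) (Ctail y k) else C0)
                  (Cmask (S k) (fun m => Cmul (x m) (y k)) m))).
  { intros m. unfold Cmask. destruct (Nat.lt_total m k) as [Hlt | [<- | Hgt]].
    - apply Cseries_ext with (fun _ => C0); [intros n; destruct_nat_tests; lia || reflexivity|].
      replace (Cadd _ _) with C0 by (destruct_nat_tests; lia || C_ring). apply Cseries_zero.
    - apply Cseries_ext with (fun n => Cmul (x m) (Cmask m y n)).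
      { intros n. unfold Cmask. destruct_nat_tests; lia || reflexivity || C_ring. }
      replace (Cadd _ _) with (Cmul (x m) (Ctail y m)) by (destruct_nat_tests; lia || C_ring).
      apply Cseries_mul_l, Ctail_spec, Hy.
    - apply Cseries_ext with (fun n => if Nat.eqb n k then Cmul (x m) (y k) else C0).
      { intros n. destruct_nat_tests; try lia; try reflexivity. do 2 f_equal. lia. }
      replace (Cadd _ _) with (Cmul (x m) (y k)) by (destruct_nat_tests; lia || C_ring).
      apply Cseries_single. }
  apply Cseries_ext with (fun m => Cadd (if Nat.eqb m k then Cmul (x k) (Ctail y k) else C0)
                                         (Cmul (Cmask (S k) x m) (y k))).
  { intros m. rewrite (Csum_eq _ _ (Hrow m)). unfold Cmask.
    destruct_nat_tests; reflexivity || C_ring. }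
  apply Cseries_add; [apply Cseries_single | apply Cseries_mul_r, Ctail_spec, Hx].
Qed.

Lemma Ctail_l1mul x y M : Csummable x -> Csummable y ->
  Ctail (l1mul x y) M = Cmul (Ctail x M) (Ctail y M).
Proof.
  intros Hx Hy. apply Ctail_eq.
  eapply Cseries_ext; [|apply (Ctail_product x y M Hx Hy)].
  intros n. unfold Cmask. destruct_nat_tests; [apply l1mul_coeff; assumption | reflexivity].
Qed.

Section WeightedNorm.

Variable omega : nat -> R.
Hypothesis omega_ge_1 : forall n, 1 <= omega n.

Lemma weighted_term_nonneg x n : 0 <= Cnorm (x n) * omega n.
Proof. pose proof (omega_ge_1 n). pose proof (Cnorm_nonneg (x n)). nra. Qed.

Lemma Cnorm_le_weighted x n : Cnorm (x n) <= Cnorm (x n) * omega n.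
Proof. pose proof (omega_ge_1 n). pose proof (Cnorm_nonneg (x n)). nra. Qed.

Lemma l1norm_spec x :
  in_l1 omega x -> infinite_sum (fun n => Cnorm (x n) * omega n) (l1norm omega x).
Proof. intros [l H]. unfold l1norm. rewrite (Rsum_eq _ _ H). exact H. Qed.

(* Since [omega >= 1], elements of [l^1_omega] are absolutely summable. *)
Lemma l1_Csummable x : in_l1 omega x -> Csummable x.
Proof.
  intros [l H]. split; apply (summable_dominated _ _ l) with (2 := H); intros n;
    eapply Rle_trans; [apply Cnorm_ge_fst | apply Cnorm_le_weighted
                      | apply Cnorm_ge_snd | apply Cnorm_le_weighted].
Qed.

Lemma Cnorm_Ctail_le x M : in_l1 omega x -> Cnorm (Ctail x M) <= 2 * l1norm omega x.
Proof.
  intros Hx. destruct (l1_Csummable x Hx) as [Hre Him].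
  assert (Hmask : forall u, (forall n, Rabs (u n) <= Cnorm (x n)) ->
                   forall n, Rabs (mask M u n) <= Cnorm (x n) * omega n).
  { intros u Hu n. unfold mask. destruct_nat_tests.
    - eapply Rle_trans; [apply Hu | apply Cnorm_le_weighted].
    - rewrite Rabs_R0. apply weighted_term_nonneg. }
  pose proof (infinite_sum_abs_le _ _ _ _ (tail_spec _ M Hre) (l1norm_spec x Hx)
                (Hmask _ (fun n => Cnorm_ge_fst (x n)))).
  pose proof (infinite_sum_abs_le _ _ _ _ (tail_spec _ M Him) (l1norm_spec x Hx)
                (Hmask _ (fun n => Cnorm_ge_snd (x n)))).
  pose proof (Cnorm_le_components (Ctail x M)). cbn [Ctail fst snd] in *. lra.
Qed.

Lemma weighted_coeff_le x N : in_l1 omega x -> Cnorm (x N) * omega N <= l1norm omega x.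
Proof.
  intros Hx. apply (term_le_infinite_sum (fun n => Cnorm (x n) * omega n)).
  - apply weighted_term_nonneg.
  - apply l1norm_spec, Hx.
Qed.

End WeightedNorm.

(** * The almost multiplicative maps [T_N] *)

(* [T_N x] is the matrix [[chi(x), omega(N) x(N)], [0, chi(x)]] with [chi] the
   character [x |-> sum_(n > N) x(n)]; the off-diagonal entry is almost a point
   derivation at [chi], with defect [omega(N) x(N) y(N)]. *)
Definition near_mult_map (omega : nat -> R) (N : nat) (x : seqC) : T2 :=
  (Ctail x (S N), Cmul (omega N, 0) (x N)).

Section NearMultMap.

Variable omega : nat -> R.
Hypothesis omega_ge_1 : forall n, 1 <= omega n.
Variable N : nat.

Let T := near_mult_map omega N.

Lemma near_mult_map_linear : is_linear omega T.
Proof.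
  split.
  - intros x y Hx Hy. unfold T, near_mult_map, T2add, l1add.
    rewrite Ctail_add by (apply (l1_Csummable omega); assumption).
    f_equal. C_ring.
  - intros c x Hx. unfold T, near_mult_map, T2scal, l1scal.
    rewrite Ctail_mul_l by (apply (l1_Csummable omega); assumption).
    f_equal. C_ring.
Qed.

Lemma near_mult_map_bounded : opnorm_le omega T 3.
Proof.
  intros x Hx. unfold T, near_mult_map, T2norm. cbn [fst snd].
  rewrite Cnorm_mul, Cnorm_real, Rabs_right by (pose proof (omega_ge_1 N); lra).
  pose proof (Cnorm_Ctail_le omega omega_ge_1 x (S N) Hx).
  pose proof (weighted_coeff_le omega omega_ge_1 x N Hx). lra.
Qed.

(* The diagonal is multiplicative, so [T(xy) - T(x)T(y)] is concentrated off the
   diagonal, where it equals [omega(N) x(N) y(N)]. *)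
Lemma near_mult_map_defect_formula x y : in_l1 omega x -> in_l1 omega y ->
  T2sub (T (l1mul x y)) (T2mul (T x) (T y)) = (C0, Cmul (omega N, 0) (Cmul (x N) (y N))).
Proof.
  intros Hx Hy. apply l1_Csummable in Hx, Hy; try exact omega_ge_1.
  unfold T, near_mult_map, T2sub, T2mul. cbn [fst snd].
  rewrite Ctail_l1mul, l1mul_coeff, (Ctail_succ y N) by assumption.
  f_equal; C_ring.
Qed.

Lemma near_mult_map_defect : defect_le omega T (/ omega N).
Proof.
  intros x y Hx Hy Hnx Hny. rewrite near_mult_map_defect_formula by assumption.
  unfold T2norm. cbn [fst snd].
  pose proof (omega_ge_1 N).
  rewrite Cnorm_C0, !Cnorm_mul, Cnorm_real, Rabs_right by lra.
  pose proof (weighted_coeff_le omega omega_ge_1 x N Hx).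
  pose proof (weighted_coeff_le omega omega_ge_1 y N Hy).
  pose proof (weighted_term_nonneg omega omega_ge_1 x N).
  pose proof (weighted_term_nonneg omega omega_ge_1 y N).
  apply Rmult_le_reg_r with (omega N); [lra|]. rewrite Rinv_l by lra.
  replace ((0 + omega N * (Cnorm (x N) * Cnorm (y N))) * omega N)
    with ((Cnorm (x N) * omega N) * (Cnorm (y N) * omega N)) by ring.
  rewrite <- (Rmult_1_l 1). apply Rmult_le_compat; lra.
Qed.

End NearMultMap.

(** * Distance from multiplicative maps *)

(* An idempotent of [T_2] is diagonal: from [p^2 = p] and [2 p r = r] we get
   [p r = 2 p^2 r = 2 p r], so [p r = 0] and [r = 0]. *)
Lemma T2_idempotent_diagonal (s : T2) : T2mul s s = s -> snd s = C0.
Proof.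
  destruct s as [[a b] [c d]]. unfold T2mul, Cmul, Cadd, C0. cbn [fst snd].
  intros E. injection E as Ea Eb Ec Ed.
  assert (Hpr1 : a * c - b * d = 0) by nra.
  assert (Hpr2 : a * d + b * c = 0) by nra.
  f_equal; nra.
Qed.

Definition unit_vec (N : nat) : seqC := fun n => if Nat.eqb n N then (1, 0) else C0.

Lemma unit_vec_l1 omega N : infinite_sum (fun n => Cnorm (unit_vec N n) * omega n) (omega N).
Proof.
  apply infinite_sum_ext with (fun n => if Nat.eqb n N then omega N else 0);
    [|apply infinite_sum_single].
  intros n. unfold unit_vec. destruct_nat_tests; subst.
  - rewrite Cnorm_real, Rabs_R1. ring.
  - rewrite Cnorm_C0. ring.
Qed.

Lemma unit_vec_Ctail N k : Ctail (unit_vec N) k = if Nat.leb k N then (1, 0) else C0.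
Proof.
  apply Ctail_eq. destruct_nat_tests.
  - apply Cseries_ext with (unit_vec N); [|apply Cseries_single].
    intros n. unfold Cmask, unit_vec. destruct_nat_tests; lia || reflexivity.
  - apply Cseries_ext with (fun _ => C0); [|apply Cseries_zero].
    intros n. unfold Cmask, unit_vec. destruct_nat_tests; lia || reflexivity.
Qed.

Lemma unit_vec_idempotent N : l1mul (unit_vec N) (unit_vec N) = unit_vec N.
Proof.
  assert (Hsum : Csummable (unit_vec N)).
  { apply (l1_Csummable (fun _ => 1)); [intros; apply Rle_refl|].
    exists 1. apply (unit_vec_l1 (fun _ => 1)). }
  apply functional_extensionality. intros k.
  rewrite l1mul_coeff, !unit_vec_Ctail by assumption.
  unfold unit_vec. destruct_nat_tests; lia || C_ring.
Qed.

(* Every multiplicative [phi] is at distance at least [1] from [T_N]: on [delta_N],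
   [phi] has zero off-diagonal entry while [T_N] has [omega N = ||delta_N||]. *)
Lemma near_mult_map_far omega N phi : (forall n, 1 <= omega n) -> is_mult omega phi ->
  omega N <= T2norm (T2sub (near_mult_map omega N (unit_vec N)) (phi (unit_vec N))).
Proof.
  intros Hw [_ [_ Hmult]].
  assert (Hl1 : in_l1 omega (unit_vec N)) by (exists (omega N); apply unit_vec_l1).
  assert (Hdiag : snd (phi (unit_vec N)) = C0).
  { apply T2_idempotent_diagonal. rewrite <- Hmult, unit_vec_idempotent by exact Hl1.
    reflexivity. }
  unfold T2norm, T2sub, near_mult_map. cbn [fst snd]. rewrite Hdiag.
  replace (Csub (Cmul (omega N, 0) (unit_vec N N)) C0) with (omega N, 0)
    by (unfold unit_vec; rewrite Nat.eqb_refl; C_ring).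
  rewrite Cnorm_real, Rabs_right by (pose proof (Hw N); lra).
  pose proof (Cnorm_nonneg (Csub (Ctail (unit_vec N) (S N)) (fst (phi (unit_vec N))))). lra.
Qed.

(* If the pair were AMNM, the constants [K = 3], [eps = 1/2] would give some [delta];
   taking [N] with [omega N > 1/delta], the map [T_N] has norm at most [3] and defect
   at most [1/omega N < delta], yet it stays at distance [1] from [Mult]. *)
Theorem theoremt (omega : nat -> R)
  (Hw : forall n, 1 <= omega n)
  (Hunb : forall M, exists n, M < omega n) :
  ~ AMNM_pair omega.
Proof.
  intros Hamnm.
  destruct (Hamnm 3 (1/2)) as [delta [Hdelta Hstable]]; [lra | lra |].
  destruct (Hunb (/ delta)) as [N HN].
  assert (Hdefect : defect_le omega (near_mult_map omega N) delta).
  { intros x y Hx Hy Hnx Hny.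
    eapply Rle_trans; [apply near_mult_map_defect; assumption|].
    rewrite <- (Rinv_inv delta). apply Rinv_le_contravar; [apply Rinv_0_lt_compat|]; lra. }
  destruct (Hstable (near_mult_map omega N) (near_mult_map_linear omega Hw N)
              (near_mult_map_bounded omega Hw N) Hdefect (1/4))
    as [phi [Hphi Hclose]]; [lra|].
  assert (Hl1 : in_l1 omega (unit_vec N)) by (exists (omega N); apply unit_vec_l1).
  pose proof (Hclose _ Hl1) as Hupper. cbv beta in Hupper.
  unfold l1norm in Hupper. rewrite (Rsum_eq _ _ (unit_vec_l1 omega N)) in Hupper.
  pose proof (near_mult_map_far omega N phi Hw Hphi). pose proof (Hw N). lra.
Qed.
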